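(* Let $G$ be a graph, $q\in\mathcal Q(G)$, $F$ a graph with $F\to G$, and let $T_n$ ($n\ge1$) be the graphs defined below. Then \[ \lim_{n\to\infty}\log_n\hom(F,T_n)=\max_{\varphi\in\mathsf{Hom}(F,G)}\sum_{A\subseteq V_G} q(A)\cdot\mathsf{CC}\big(F|_{\varphi^{-1}(A)}\big). \]
   Context: Graphs are finite directed graphs $G=(V_G,E_G)$ with $V_G$ nonempty finite and $E_G\subseteq V_G\times V_G$. Homomorphisms are vertex maps sending edges to edges; $\mathsf{Hom}(F,G)$ is their set, $\hom$ its size, $F\to G$ means $\hom(F,G)\ge 1$. $F|_B$ is the induced subgraph on $B$ and $\mathsf{CC}$ the number of connected components ignoring directions, with $\mathsf{CC}(F|_\emptyset)=0$. $\mathcal Q(G)$ is the set of $q:\wp(V_G)\to\mathbb R$ with $q(\emptyset)=0$, $q\ge0$, and $\sum_{A\subseteq V_G}q(A)\,\mathsf{CC}(G|_A)=1$. For $q\in\mathcal Q(G)$ and $n\ge1$, $T_n$ is the graph whose vertices are pairs $(x,i)$ with $x\in V_G$ and $i:\{A\subseteq V_G:x\in A\}\to\{0,1,2,\dots\}$ with $i(A)<n^{q(A)}$, and with an edge from $(x,i)$ to $(y,j)$ iff $(x,y)\in E_G$ and $i(A)=j(A)$ for every $A$ with $\{x,y\}\subseteq A\subseteq V_G$. *)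

From Stdlib Require Import Reals.
From HB Require Import structures.
From mathcomp Require Import all_boot.

Set Implicit Arguments.
Unset Strict Implicit.
Unset Printing Implicit Defensive.

(* A finite directed graph (loops allowed): a finite vertex type and an edge relation.
   Nonemptiness of the vertex set is imposed as an explicit hypothesis where needed. *)
Record graph := Graph { vtx : finType; edg : rel vtx }.

Definition is_hom (F G : graph) (f : {ffun vtx F -> vtx G}) : bool :=
  [forall u, forall v, edg u v ==> edg (f u) (f v)].

Definition hom (F G : graph) : nat := #|[set f : {ffun vtx F -> vtx G} | is_hom f]|.

(* Number of connected components (ignoring edge directions) of the induced
   subgraph F|_B; CC(F|_emptyset) = 0. *)
Definition induced_undirected (F : graph) (B : {set vtx F}) : rel (vtx F) :=
  fun u v => [&& u \in B, v \in B & edg u v || edg v u].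
Definition CC (F : graph) (B : {set vtx F}) : nat := n_comp (induced_undirected B) B.

Definition inQ (G : graph) (q : {set vtx G} -> R) : Prop :=
  q set0 = R0 /\ (forall A, Rle R0 (q A)) /\
  \big[Rplus/R0]_(A : {set vtx G}) Rmult (q A) (INR (CC A)) = R1.

Definition npow (n : nat) (x : R) : R := Rpower (INR n) x.

(* A uniform natural bound K with n^{q(A)} < K for all A, so that all indices i(A)
   (which satisfy i(A) < n^{q(A)}) lie in 'I_K.  This is only a carrier; the actual
   constraint is the real inequality in Tvert_ok below. *)
Definition Tbound (G : graph) (q : {set vtx G} -> R) (n : nat) : nat :=
  Z.to_nat (up (\big[Rmax/R0]_(A : {set vtx G}) npow n (q A))).

(* Vertices (x, i) of T_n: i is a function on the sets A containing x with
   i(A) < n^{q(A)}; it is represented as a total function normalised to 0 on the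
   sets A not containing x (a bijective encoding). *)
Definition Tvert_ok (G : graph) (q : {set vtx G} -> R) (n : nat)
  (p : vtx G * {ffun {set vtx G} -> 'I_(Tbound q n)}) : bool :=
  [forall A : {set vtx G},
     if p.1 \in A then (if Rlt_dec (INR (p.2 A)) (npow n (q A)) then true else false)
     else nat_of_ord (p.2 A) == 0%N].

Definition Tvert (G : graph) (q : {set vtx G} -> R) (n : nat) : finType :=
  {p : vtx G * {ffun {set vtx G} -> 'I_(Tbound q n)} | @Tvert_ok G q n p}.

Definition Tedge (G : graph) (q : {set vtx G} -> R) (n : nat) : rel (@Tvert G q n) :=
  fun a b => edg (val a).1 (val b).1 &&
    [forall A : {set vtx G}, ((val a).1 \in A) && ((val b).1 \in A) ==>
                             (nat_of_ord ((val a).2 A) == nat_of_ord ((val b).2 A))].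

Definition T (G : graph) (q : {set vtx G} -> R) (n : nat) : graph :=
  @Graph (@Tvert G q n) (@Tedge G q n).

Definition logn_R (n : nat) (x : R) : R := Rdiv (ln x) (ln (INR n)).

Definition hom_value (F G : graph) (q : {set vtx G} -> R) (phi : {ffun vtx F -> vtx G}) : R :=
  \big[Rplus/R0]_(A : {set vtx G}) Rmult (q A) (INR (CC [set u | phi u \in A])).

From Stdlib Require Import Reals Lra ZArith.
From Coquelicot Require Import Coquelicot.
From HB Require Import structures.
From mathcomp Require Import all_boot.

(* A homomorphism F -> T_n is a homomorphism phi : F -> G together with, for
   every A, a label i(A) < n^{q(A)} on each connected component of
   F|_{phi^{-1}(A)}.  Hence hom(F, T_n) = sum_phi prod_A c_n(A)^{CC(F|_{phi^{-1}(A)})}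
   with c_n(A) = ceil(n^{q(A)}); since q >= 0 and n >= 1 we have
   n^{q(A)} <= c_n(A) <= 2 n^{q(A)}.  So n^M <= hom(F, T_n) <= D n^M, where M is
   the maximal value and D does not depend on n, and log_n hom(F, T_n) -> M. *)

Set Implicit Arguments.
Unset Strict Implicit.
Unset Printing Implicit Defensive.

(* Coquelicot opens R_scope globally; keep nat_scope as the default. *)
Close Scope R_scope.
Delimit Scope R_scope with Re.

Lemma RplusA : associative Rplus. Proof. by move=> *; rewrite Rplus_assoc. Qed.
HB.instance Definition _ := Monoid.isComLaw.Build R R0 Rplus RplusA Rplus_comm Rplus_0_l.

Section RealFacts.
Local Open Scope R_scope.

Lemma INR_sum (I : Type) (r : seq I) (P : pred I) (f : I -> nat) :
  INR (\sum_(i <- r | P i) f i) = \big[Rplus/0]_(i <- r | P i) INR (f i).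
Proof. by apply: (big_morph INR) => // m k; rewrite -plusE plus_INR. Qed.

Lemma ln_INR_prod (I : Type) (r : seq I) (P : pred I) (f : I -> nat) :
  (forall i, P i -> 0 < f i)%N ->
  ln (INR (\prod_(i <- r | P i) f i)) = \big[Rplus/0]_(i <- r | P i) ln (INR (f i)).
Proof.
move=> f_gt0; elim: r => [|i r IH]; first by rewrite !big_nil ln_1.
rewrite !big_cons; case: ifP => // Pi.
rewrite -multE mult_INR ln_mult -?IH //; apply: lt_0_INR; apply/ltP.
  exact: f_gt0.
exact: prodn_cond_gt0.
Qed.

Lemma bigRplus_le (I : Type) (r : seq I) (P : pred I) (F1 F2 : I -> R) :
  (forall i, P i -> F1 i <= F2 i) ->
  \big[Rplus/0]_(i <- r | P i) F1 i <= \big[Rplus/0]_(i <- r | P i) F2 i.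
Proof.
by move=> le12; apply: big_ind2 => //; [apply: Rle_refl | move=> *; apply: Rplus_le_compat].
Qed.

Lemma bigRplus_distrl (I : Type) (r : seq I) (P : pred I) (a : R) (F : I -> R) :
  \big[Rplus/0]_(i <- r | P i) (a * F i) = a * \big[Rplus/0]_(i <- r | P i) F i.
Proof.
by apply/esym/(big_morph (Rmult a)); [move=> x y; rewrite Rmult_plus_distr_l | rewrite Rmult_0_r].
Qed.

Lemma bigRplus_ge_term (I : finType) (P : pred I) (F : I -> R) j :
  (forall i, P i -> 0 <= F i) -> P j -> F j <= \big[Rplus/0]_(i | P i) F i.
Proof.
move=> F_ge0 Pj; rewrite (bigD1 j) //=.
suff : 0 <= \big[Rplus/0]_(i | P i && (i != j)) F i by lra.
by apply: big_ind => [|x y|i /andP[/F_ge0]] //; [apply: Rle_refl | lra].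
Qed.

Lemma le_bigRmax (I : eqType) (r : seq I) (F : I -> R) i :
  i \in r -> F i <= \big[Rmax/0]_(j <- r) F j.
Proof.
elim: r => [|j r IH] //; rewrite inE big_cons => /orP[/eqP-> | /IH le_i].
  exact: Rmax_l.
exact: Rle_trans le_i (Rmax_r _ _).
Qed.

Lemma finite_argmax (T : finType) (P : pred T) (f : T -> R) x0 :
  P x0 -> exists2 x, P x & forall y, P y -> f y <= f x.
Proof.
move=> Px0.
suff [x Px xmax] : exists2 x, P x & forall y, y \in enum T -> P y -> f y <= f x.
  by exists x => // y; apply: xmax; rewrite mem_enum.
elim: (enum T) => [|z s [x Px xmax]]; first by exists x0.
case Pz: (P z); last by exists x => // y; rewrite inE => /orP[/eqP-> | /xmax]; rewrite ?Pz.
have [zx | xz] := Rle_lt_dec (f z) (f x).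
  by exists x => // y; rewrite inE => /orP[/eqP-> | /xmax].
exists z => // y; rewrite inE => /orP[/eqP-> _ | /xmax le_y /le_y]; [exact: Rle_refl | lra].
Qed.

Lemma ln_INR_ge0 n : (1 <= n)%N -> 0 <= ln (INR n).
Proof. by move=> n_ge1; rewrite -ln_1; apply: ln_le; [lra | apply: (le_INR 1); apply/leP]. Qed.

Lemma exp_le_compat x y : x <= y -> exp x <= exp y.
Proof. by case=> [/exp_increasing/Rlt_le | ->] //; apply: Rle_refl. Qed.

Lemma ln_sum_bounds (I : finType) (P : pred I) (s v c : I -> R) (L : R) i0 :
  P i0 -> (forall i, P i -> v i <= v i0) -> 0 <= L ->
  (forall i, P i -> 0 < s i /\ L * v i <= ln (s i) <= c i + L * v i) ->
  0 < \big[Rplus/0]_(i | P i) s i /\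
  L * v i0 <= ln (\big[Rplus/0]_(i | P i) s i)
           <= ln (\big[Rplus/0]_(i | P i) exp (c i)) + L * v i0.
Proof.
move=> Pi0 v_max L_ge0 s_bounds.
have [s0_pos [s0_lo _]] := s_bounds i0 Pi0.
have s0_le : s i0 <= \big[Rplus/0]_(i | P i) s i.
  by apply: bigRplus_ge_term => // i /s_bounds[/Rlt_le].
have exp_pos_sum : 0 < \big[Rplus/0]_(i | P i) exp (c i).
  apply: Rlt_le_trans (exp_pos (c i0)) _.
  by apply: bigRplus_ge_term => // i _; apply/Rlt_le/exp_pos.
split; first lra; split; first exact: Rle_trans s0_lo (ln_le _ _ s0_pos s0_le).
rewrite -(ln_exp (L * v i0)) -ln_mult //; last exact: exp_pos.
apply: ln_le; first exact: Rlt_le_trans s0_pos s0_le.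
rewrite Rmult_comm -bigRplus_distrl; apply: bigRplus_le => i Pi.
have [si_pos [_ si_hi]] := s_bounds i Pi.
rewrite -(exp_ln _ si_pos) -exp_plus; apply: exp_le_compat.
have := v_max i Pi; nra.
Qed.

Lemma logn_cv (a : nat -> R) (M C : R) :
  (forall n, (2 <= n)%N ->
     0 < a n /\ ln (INR n) * M <= ln (a n) <= C + ln (INR n) * M) ->
  Un_cv (fun n => logn_R n (a n)) M.
Proof.
move=> a_bounds; apply/is_lim_seq_Reals.
have ln_lim : is_lim_seq (fun n => ln (INR n)) p_infty.
  by apply: (is_lim_comp_seq _ _ _ _ is_lim_ln_p); [exists O | exact: is_lim_seq_INR].
have upper_lim : is_lim_seq (fun n => M + C * / ln (INR n)) M.
  rewrite -{2}(Rplus_0_r M); apply: is_lim_seq_plus'; first exact: is_lim_seq_const.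
  rewrite -(Rmult_0_r C).
  exact: (is_lim_seq_scal_l _ C 0 (is_lim_seq_inv _ _ ln_lim ltac:(discriminate))).
apply: (is_lim_seq_le_le_loc _ _ _ _ _ (is_lim_seq_const M) upper_lim).
exists 2%nat => n /leP n_ge2; have [_ [lo hi]] := a_bounds n n_ge2.
have ln_pos : 0 < ln (INR n).
  rewrite -ln_1; apply: ln_increasing; first lra.
  by apply: (lt_INR 1); apply/ltP.
rewrite /logn_R; split; first by apply/Rle_div_r; lra.
apply/Rle_div_l => //; field_simplify; lra.
Qed.

End RealFacts.

Lemma is_homP (F G : graph) (f : {ffun vtx F -> vtx G}) :
  reflect (forall u v, edg u v -> edg (f u) (f v)) (is_hom f).
Proof.
apply: (iffP forallP) => [f_hom u v | f_hom u].
  by move/forallP: (f_hom u) => /(_ v) /implyP.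
by apply/forallP => v; apply/implyP/f_hom.
Qed.

Definition ltRb (a b : R) : bool := if Rlt_dec a b then true else false.

Lemma ltRbP (a b : R) : reflect (a < b)%Re (ltRb a b).
Proof. by rewrite /ltRb; case: Rlt_dec => h; constructor. Qed.

Lemma card_ord_ltn m c : c <= m -> #|[pred k : 'I_m | k < c]| = c.
Proof.
move=> c_le; have widen_inj : injective (widen_ord c_le).
  by move=> i j /(congr1 val) eq_ij; apply: val_inj.
rewrite -[RHS](card_ord c) -(card_imset _ widen_inj).
apply: eq_card => k; rewrite inE; apply/idP/imsetP => [k_lt | [i _ ->]].
  by exists (Ordinal k_lt) => //; apply: val_inj.
by rewrite /= ltn_ord.
Qed.

Section Labels.
Variables (G : graph) (q : {set vtx G} -> R) (n : nat).
Local Notation K := (Tbound q n).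

Lemma npow_pos x : (0 < npow n x)%Re.
Proof. exact: exp_pos. Qed.

Lemma npow_lt_Tbound A : (npow n (q A) < INR K)%Re.
Proof.
rewrite /Tbound; set m := \big[Rmax/R0]_(B : {set vtx G}) npow n (q B).
have le_m : (npow n (q A) <= m)%Re by apply: le_bigRmax; rewrite mem_index_enum.
have [up_gt _] := archimed m.
have up_ge0 : (0 <= up m)%Z by apply: le_IZR; have := npow_pos (q A); lra.
by rewrite INR_IZR_INZ Z2Nat.id //; lra.
Qed.

Lemma Tbound_gt0 : 0 < K.
Proof.
apply/ltP/INR_lt; have := npow_pos (q set0); have := npow_lt_Tbound set0.
by rewrite /=; lra.
Qed.

Definition label0 : 'I_K := Ordinal Tbound_gt0.

Lemma exists_large_label A : exists k, ~~ ltRb (INR k) (npow n (q A)).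
Proof. by exists K; apply/ltRbP; have := npow_lt_Tbound A; lra. Qed.

(* The number of admissible values of i(A), i.e. the ceiling of n^{q(A)}. *)
Definition nlabels A : nat := ex_minn (exists_large_label A).

Lemma ltn_nlabels A k : (k < nlabels A) = ltRb (INR k) (npow n (q A)).
Proof.
rewrite /nlabels; case: ex_minnP => m /ltRbP m_large m_min.
case: (boolP (ltRb _ _)) => [/ltRbP k_small | /m_min]; last by rewrite ltnNge => ->.
apply/negbNE/negP; rewrite -leqNgt => /leP/le_INR; lra.
Qed.

Lemma nlabels_leq_Tbound A : nlabels A <= K.
Proof.
rewrite /nlabels; case: ex_minnP => m _; apply; apply/ltRbP.
by have := npow_lt_Tbound A; lra.
Qed.

Lemma nlabels_gt0 A : 0 < nlabels A.
Proof. by rewrite ltn_nlabels; apply/ltRbP; have := npow_pos (q A); rewrite /=; lra. Qed.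

Lemma npow_le_nlabels A : (npow n (q A) <= INR (nlabels A))%Re.
Proof. by have := ltn_nlabels A (nlabels A); rewrite ltnn => /esym/negbT/ltRbP; lra. Qed.

Lemma nlabels_lt_npowS A : (INR (nlabels A) < npow n (q A) + 1)%Re.
Proof.
have := ltn_nlabels A (nlabels A).-1; rewrite prednK ?nlabels_gt0 // leqnn => /esym/ltRbP.
by rewrite -(prednK (nlabels_gt0 A)) S_INR /=; lra.
Qed.

End Labels.

Section Fibers.
Variables (G F : graph) (q : {set vtx G} -> R) (n : nat).
Local Notation VG := (vtx G).
Local Notation VF := (vtx F).
Local Notation K := (Tbound q n).
Local Notation TV := (vtx (T q n)).
Local Notation label0 := (label0 q n).
Local Notation nlabels := (nlabels q n).
Implicit Types (phi : {ffun VF -> VG}) (f : {ffun VF -> TV}) (A : {set VG}) (u v : VF).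

Definition comp_rel phi A := induced_undirected (phi @^-1: A).
Definition is_comp_root phi A u := (u \in phi @^-1: A) && (root (comp_rel phi A) u == u).

Lemma comp_rel_sym phi A : connect_sym (comp_rel phi A).
Proof. by apply: sym_connect_sym => u v; rewrite /comp_rel /induced_undirected andbCA orbC. Qed.

Lemma comp_rel_closed phi A : closed (comp_rel phi A) (phi @^-1: A).
Proof. by move=> u v /and3P[-> ->]. Qed.

Lemma is_comp_root_root phi A u :
  u \in phi @^-1: A -> is_comp_root phi A (root (comp_rel phi A) u).
Proof.
move=> u_in; rewrite /is_comp_root (root_root (@comp_rel_sym phi A)) eqxx andbT.
by rewrite -(closed_connect (@comp_rel_closed phi A) (connect_root _ u)).
Qed.

Lemma CC_preimset phi A : CC (phi @^-1: A) = #|[pred u | is_comp_root phi A u]|.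
Proof. by apply: eq_card => u; rewrite !inE /is_comp_root andbC inE. Qed.

Definition proj f : {ffun VF -> VG} := [ffun u => (val (f u)).1].
Definition fiber phi := [set f : {ffun VF -> TV} | is_hom f & proj f == phi].

Lemma proj_hom f : is_hom f -> is_hom (proj f).
Proof.
move/is_homP=> f_hom; apply/is_homP => u v /f_hom /andP[+ _].
by rewrite !ffunE.
Qed.

Lemma vertex_label_lt (a : TV) A : (val a).1 \in A -> (val a).2 A < nlabels A.
Proof. by move=> a_in; have := forallP (valP a) A; rewrite a_in ltn_nlabels. Qed.

Lemma vertex_label_out (a : TV) A : (val a).1 \notin A -> (val a).2 A = label0.
Proof.
move=> a_out; have := forallP (valP a) A; rewrite (negbTE a_out) => /eqP a_0.
exact: val_inj.
Qed.

Lemma fiber_label_connect phi A f u v :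
  f \in fiber phi -> connect (comp_rel phi A) u v -> (val (f u)).2 A = (val (f v)).2 A.
Proof.
rewrite inE => /andP[/is_homP f_hom /eqP f_phi] /connectP[p p_path ->] {v}.
have in_A w : w \in phi @^-1: A -> (val (f w)).1 \in A by rewrite inE -f_phi ffunE.
have label_edge w w' : edg w w' -> w \in phi @^-1: A -> w' \in phi @^-1: A ->
    (val (f w)).2 A = (val (f w')).2 A.
  move=> ww' /in_A wA /in_A w'A; apply: val_inj.
  by have /andP[_ /forallP/(_ A)] := f_hom w w' ww'; rewrite wA w'A => /eqP.
elim: p u p_path => //= w p IH u /andP[/and3P[u_in w_in /orP[uw | wu]] /IH <-].
  exact: label_edge.
exact/esym/label_edge.
Qed.

(* A homomorphism in [fiber phi] is determined by its labels at the roots of the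
   components of each F|_{phi^{-1}(A)}; a [label_fun] records them, with all
   other entries set to [label0]. *)
Definition label_fun := {ffun {set VG} -> {ffun VF -> 'I_K}}.
Implicit Types (g : label_fun).

Definition root_labelling phi := family (fun A : {set VG} =>
  family (fun u : VF =>
    [pred k : 'I_K | if is_comp_root phi A u then k < nlabels A else k == label0])).

Definition clamp_label A (k : 'I_K) : 'I_K := if k < nlabels A then k else label0.

Lemma clamp_label_lt A k : clamp_label A k < nlabels A.
Proof. by rewrite /clamp_label; case: ifP => // _; apply: nlabels_gt0. Qed.

Definition lift_label phi g u : {ffun {set VG} -> 'I_K} :=
  [ffun A : {set VG} =>
     if phi u \in A then clamp_label A (g A (root (comp_rel phi A) u)) else label0].

Lemma lift_label_ok phi g u :
  @Tvert_ok G q n (phi u, lift_label phi g u).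
Proof.
apply/forallP => A /=; rewrite ffunE; case: (phi u \in A) => //=.
by have := clamp_label_lt A (g A (root (comp_rel phi A) u)); rewrite ltn_nlabels.
Qed.

Definition lift phi g : {ffun VF -> TV} :=
  [ffun u => exist _ (phi u, lift_label phi g u) (lift_label_ok phi g u) : Tvert q n].

Definition root_labels phi f : label_fun :=
  [ffun A : {set VG} => [ffun u => if is_comp_root phi A u then (val (f u)).2 A else label0]].

Lemma lift_in_fiber phi g : is_hom phi -> lift phi g \in fiber phi.
Proof.
move/is_homP=> phi_hom; rewrite inE; apply/andP; split.
  apply/is_homP => u v uv; rewrite !ffunE; apply/andP; split; first exact: phi_hom.
  apply/forallP => A; apply/implyP => /andP[uA vA] /=; rewrite !ffunE uA vA.
  suff -> : root (comp_rel phi A) u = root (comp_rel phi A) v by [].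
  apply/(rootP (@comp_rel_sym phi A))/connect1.
  by rewrite /comp_rel /induced_undirected !inE uA vA uv.
by apply/eqP/ffunP => u; rewrite !ffunE.
Qed.

Lemma lift_inj phi : {in root_labelling phi &, injective (lift phi)}.
Proof.
move=> g1 g2 /familyP g1_ok /familyP g2_ok eq_lift; apply/ffunP => A; apply/ffunP => u.
have := (familyP (g1_ok A)) u; have := (familyP (g2_ok A)) u; rewrite !inE.
case: (boolP (is_comp_root phi A u)) => [root_u g2_lt g1_lt | _ /eqP-> /eqP->] //.
move: root_u (congr1 (fun f : {ffun VF -> TV} => (val (f u)).2 A) eq_lift).
rewrite /is_comp_root inE => /andP[uA /eqP root_u].
by rewrite !ffunE /= uA root_u /clamp_label g1_lt g2_lt.
Qed.

Lemma root_labels_ok phi f : f \in fiber phi -> root_labels phi f \in root_labelling phi.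
Proof.
rewrite inE => /andP[_ /eqP f_phi]; apply/familyP => A; apply/familyP => u; rewrite inE !ffunE.
case root_u: (is_comp_root phi A u) => //; apply: vertex_label_lt.
by move: root_u; rewrite /is_comp_root inE -f_phi ffunE => /andP[].
Qed.

Lemma root_labels_inj phi : {in fiber phi &, injective (root_labels phi)}.
Proof.
move=> f1 f2 f1_in f2_in eq_labels; apply/ffunP => u; apply: val_inj.
have fst_phi f : f \in fiber phi -> (val (f u)).1 = phi u.
  by rewrite inE => /andP[_ /eqP <-]; rewrite ffunE.
have eq_snd : (val (f1 u)).2 = (val (f2 u)).2.
  apply/ffunP => A; case: (boolP (phi u \in A)) => uA; last first.
    by rewrite !vertex_label_out ?fst_phi.
  have to_root := connect_root (comp_rel phi A) u.
  rewrite (fiber_label_connect f1_in to_root) (fiber_label_connect f2_in to_root).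
  have := congr1 (fun g : label_fun => g A (root (comp_rel phi A) u)) eq_labels.
  by rewrite !ffunE is_comp_root_root ?inE.
by rewrite [val (f1 u)]surjective_pairing [val (f2 u)]surjective_pairing eq_snd !fst_phi.
Qed.

Lemma card_fiber phi : is_hom phi -> #|fiber phi| = #|root_labelling phi|.
Proof.
move=> phi_hom; apply/eqP; rewrite eqn_leq; apply/andP; split.
  rewrite -(card_in_imset (@root_labels_inj phi)); apply: subset_leq_card.
  by apply/subsetP => _ /imsetP[f f_in ->]; apply: root_labels_ok.
rewrite -(card_in_imset (@lift_inj phi)); apply: subset_leq_card.
by apply/subsetP => _ /imsetP[g _ ->]; apply: lift_in_fiber.
Qed.

Definition fiber_count phi := \prod_(A : {set VG}) nlabels A ^ CC (phi @^-1: A).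

Lemma card_root_labelling phi : #|root_labelling phi| = fiber_count phi.
Proof.
rewrite card_family foldrE big_map big_enum; apply: eq_bigr => A _.
rewrite card_family foldrE big_map big_enum CC_preimset -prod_nat_const [RHS]big_mkcond.
apply: eq_bigr => u _; rewrite inE; case: ifP => _.
  by rewrite card_ord_ltn // nlabels_leq_Tbound.
by rewrite -(card1 label0); apply: eq_card => k; rewrite !inE.
Qed.

Lemma hom_T : hom F (T q n) = \sum_(phi | is_hom phi) fiber_count phi.
Proof.
rewrite /hom -sum1_card (partition_big proj (fun phi => is_hom phi)) /=; last first.
  by move=> f; rewrite inE; apply: proj_hom.
apply: eq_bigr => phi phi_hom; rewrite -card_root_labelling -card_fiber // -sum1_card.
by apply: eq_bigl => f; rewrite !inE.
Qed.

End Fibers.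

Lemma INR_expn m k : INR (m ^ k) = (INR m ^ k)%Re.
Proof. by elim: k => [|k IH] //; rewrite expnS -multE mult_INR IH. Qed.

Section Bounds.
Local Open Scope R_scope.
Variables (G F : graph) (q : {set vtx G} -> R) (n : nat).
Hypotheses (q_ge0 : forall A, 0 <= q A) (n_ge1 : (1 <= n)%N).

Lemma ln_nlabels_bounds A :
  q A * ln (INR n) <= ln (INR (nlabels q n A)) <= ln 2 + q A * ln (INR n).
Proof.
have npow_ge1 : 1 <= npow n (q A).
  by rewrite /npow /Rpower -exp_0; apply/exp_le_compat/Rmult_le_pos/ln_INR_ge0.
have nlabels_pos : 0 < INR (nlabels q n A) by apply/lt_0_INR/ltP/nlabels_gt0.
have := npow_le_nlabels q n A; have := nlabels_lt_npowS q n A.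
rewrite -(ln_Rpower (INR n) (q A)) -/(npow n (q A)) => lt_S le_n.
split; first exact: ln_le (npow_pos n (q A)) le_n.
by rewrite -ln_mult; [apply: ln_le nlabels_pos _ | | apply: npow_pos]; lra.
Qed.

Definition cc_total (phi : {ffun vtx F -> vtx G}) : nat := \sum_(A : {set vtx G}) CC (phi @^-1: A).

Lemma ln_fiber_count_bounds phi :
  0 < INR (fiber_count q n phi) /\
  ln (INR n) * hom_value q phi <= ln (INR (fiber_count q n phi))
                              <= ln 2 * INR (cc_total phi) + ln (INR n) * hom_value q phi.
Proof.
have term_gt0 A : (0 < nlabels q n A ^ CC (phi @^-1: A))%N by rewrite expn_gt0 nlabels_gt0.
split; first exact/lt_0_INR/ltP/prodn_cond_gt0.
rewrite /fiber_count /hom_value /cc_total ln_INR_prod // INR_sum -!bigRplus_distrl -big_split.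
have term_bounds (A : {set vtx G}) : INR (CC (phi @^-1: A)) * (q A * ln (INR n)) <=
    ln (INR (nlabels q n A ^ CC (phi @^-1: A))%N) <=
    INR (CC (phi @^-1: A)) * (ln 2 + q A * ln (INR n)).
  rewrite INR_expn ln_pow; last exact/lt_0_INR/ltP/nlabels_gt0.
  have := pos_INR (CC (phi @^-1: A)); have := ln_nlabels_bounds A; nra.
split; apply: bigRplus_le => A _ /=; have := term_bounds A;
  rewrite -[[set u | phi u \in A]]/(phi @^-1: A); nra.
Qed.

End Bounds.

Theorem corollary6p2 (G F : graph) (q : {set vtx G} -> R)
  (hG : 0 < #|vtx G|) (hF : 0 < #|vtx F|)
  (hq : inQ q) (hFG : 1 <= hom F G) :
  exists2 phi0 : {ffun vtx F -> vtx G}, is_hom phi0 &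
    (forall phi : {ffun vtx F -> vtx G}, is_hom phi -> Rle (hom_value q phi) (hom_value q phi0)) /\
    Un_cv (fun n : nat => logn_R n (INR (hom F (T q n)))) (hom_value q phi0).
Proof.
have [_ [q_ge0 _]] := hq.
have [phi1 phi1_hom] : exists phi : {ffun vtx F -> vtx G}, is_hom phi.
  by case/card_gt0P: hFG => phi; rewrite inE; exists phi.
have [phi0 phi0_hom phi0_max] := finite_argmax (hom_value q) phi1_hom.
exists phi0 => //; split => //.
apply: (logn_cv (C := ln (\big[Rplus/R0]_(phi | is_hom phi) exp (ln 2 * INR (cc_total phi))))).
move=> n n_ge2; rewrite hom_T INR_sum.
have n_ge1 : (1 <= n)%N by apply: ltnW.
apply: ln_sum_bounds => // [|phi _]; first exact: ln_INR_ge0.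
exact: ln_fiber_count_bounds.
Qed.
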